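(* Let $L\ge 2$, $\lambda>0$, $d_{\min}>0$, let ${\bf q}_r\in\mathbb{R}^3$ and ${\cal C}\subseteq\mathbb{R}^3$, and let ${\bm\kappa}_k,{\bm\kappa}_{k'}\in\mathbb{R}^3$ be unit vectors with ${\bm\kappa}_k\neq{\bm\kappa}_{k'}$. Consider the problem $$\min_{{\bf q}_1,\dots,{\bf q}_L\in\mathbb{R}^3}\ \xi({\bf q}_1,\dots,{\bf q}_L):=\frac{1}{L^2}\Big|\sum_{l=1}^L e^{\,\mathrm{j}\frac{2\pi}{\lambda}({\bm\kappa}_k-{\bm\kappa}_{k'})^T{\bf q}_l}\Big|^2$$ subject to ${\bf q}_r+{\bf q}_l\in{\cal C}$ for all $l$ and $\|{\bf q}_l-{\bf q}_{l'}\|\ge d_{\min}$ for all $l\neq l'$. Let $\nu_{\min}=\big\lceil L d_{\min}\|{\bm\kappa}_k-{\bm\kappa}_{k'}\|/\lambda-1\big\rceil$ and $$\varsigma^\star=\begin{cases}\nu_{\min}/L, & \text{if } \mathrm{mod}(\nu_{\min}+1,L)\neq 0,\\ (\nu_{\min}+1)/L, & \text{otherwise.}\end{cases}$$ For an arbitrary ${\bf q}_1\in\mathbb{R}^3$ define $${\bf q}_l={\bf q}_1+(l-1)\frac{(\varsigma^\star+1/L)\lambda}{\|{\bm\kappa}_k-{\bm\kappa}_{k'}\|^2}({\bm\kappa}_k-{\bm\kappa}_{k'}),\quad l=1,\dots,L.$$ Then $\xi({\bf q}_1,\dots,{\bf q}_L)=0$ and $\|{\bf q}_l-{\bf q}_{l'}\|\ge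 d_{\min}$ for all $l\neq l'$. Consequently, whenever ${\bf q}_1$ is such that ${\bf q}_r+{\bf q}_l\in{\cal C}$ for all $l$, these positions form an optimal solution of the problem, achieving objective value zero.
   Context: $\mathrm{j}$ denotes the imaginary unit; $\lceil\cdot\rceil$ is the ceiling function; $\mathrm{mod}(a,b)$ is the remainder of integer $a$ divided by $b$. The quantity $\xi$ is the squared correlation coefficient between the far-field (uniform plane wave) channels of two users with propagation directions ${\bm\kappa}_k,{\bm\kappa}_{k'}$ received by $L$ single-antenna UAVs at positions ${\bf q}_l$ (relative to a reference point ${\bf q}_r$), ${\cal C}$ is the UAV movable region and $d_{\min}$ the minimum safe inter-UAV distance. *)

From Stdlib Require Import Reals Lra Lia ZArith.
From Coquelicot Require Import Coquelicot.
Open Scope R_scope.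

Definition vec3 : Type := (R * R * R)%type.
Definition vadd (u v : vec3) : vec3 :=
  let '(a1, a2, a3) := u in let '(b1, b2, b3) := v in (a1 + b1, a2 + b2, a3 + b3).
Definition vsub (u v : vec3) : vec3 :=
  let '(a1, a2, a3) := u in let '(b1, b2, b3) := v in (a1 - b1, a2 - b2, a3 - b3).
Definition vscale (c : R) (u : vec3) : vec3 :=
  let '(a1, a2, a3) := u in (c * a1, c * a2, c * a3).
Definition vdot (u v : vec3) : R :=
  let '(a1, a2, a3) := u in let '(b1, b2, b3) := v in a1 * b1 + a2 * b2 + a3 * b3.
Definition vnorm (u : vec3) : R := sqrt (vdot u u).

Definition Rceil (x : R) : Z := (- Int_part (- x))%Z.

Definition cexpj (theta : R) : C := (cos theta, sin theta).

(* xi(q_1,...,q_L) = 1/L^2 | sum_{l=1}^L e^{j (2 pi / lam) (kk - kk')^T q_l} |^2 ;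
   positions are indexed by l = 1..L. *)
Definition xi (L : nat) (lam : R) (kk kk' : vec3) (q : nat -> vec3) : R :=
  / (INR L) ^ 2 *
  (Cmod (sum_n (fun i => cexpj (2 * PI / lam * vdot (vsub kk kk') (q (S i)))) (L - 1)%nat)) ^ 2.

Definition feasible (L : nat) (dmin : R) (qr : vec3) (Creg : vec3 -> Prop)
  (q : nat -> vec3) : Prop :=
  (forall l, (1 <= l <= L)%nat -> Creg (vadd qr (q l))) /\
  (forall l l', (1 <= l <= L)%nat -> (1 <= l' <= L)%nat -> l <> l' ->
     dmin <= vnorm (vsub (q l) (q l'))).

Definition nu_min (L : nat) (lam dmin : R) (kk kk' : vec3) : Z :=
  Rceil (INR L * dmin * vnorm (vsub kk kk') / lam - 1).

Definition varsigma_star (L : nat) (lam dmin : R) (kk kk' : vec3) : R :=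
  let nu := nu_min L lam dmin kk kk' in
  if negb (Z.eqb (Z.modulo (nu + 1) (Z.of_nat L)) 0)
  then IZR nu / INR L
  else IZR (nu + 1) / INR L.

Definition q_star (L : nat) (lam dmin : R) (kk kk' : vec3) (q1 : vec3) (l : nat) : vec3 :=
  vadd q1 (vscale (INR (l - 1) * ((varsigma_star L lam dmin kk kk' + / INR L) * lam
                     / (vnorm (vsub kk kk')) ^ 2)) (vsub kk kk')).

(* The positions form an arithmetic progression along d = kk - kk' whose step
   advances the phase 2 pi / lam * d^T q_l by 2 pi M / L, where M = L varsigma* + 1
   is an integer not divisible by L.  The phases are then L equally spaced points
   of a nontrivial orbit of an L-th root of unity, whose sum vanishes by the
   geometric series formula.  The choice of nu_min makes M >= L dmin |d| / lam,
   which is exactly the statement that consecutive positions are at least dmin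
   apart.  Since xi is always nonnegative, a feasible point with xi = 0 is optimal. *)
From Stdlib Require Import Reals Lra Lia ZArith.
From Coquelicot Require Import Coquelicot.
Open Scope R_scope.

Lemma cexpj_add (x y : R) : Cmult (cexpj x) (cexpj y) = cexpj (x + y).
Proof. unfold Cmult, cexpj; simpl. rewrite cos_plus, sin_plus. f_equal; ring. Qed.

Lemma cexpj_2PI_IZR (k : Z) : cexpj (2 * PI * IZR k) = 1.
Proof.
  assert (Hnat : forall n : nat, cexpj (2 * PI * INR n) = 1).
  { intro n. unfold cexpj. rewrite <- (Rplus_0_l (2 * PI * INR n)).
    replace (0 + 2 * PI * INR n) with (0 + 2 * INR n * PI) by ring.
    rewrite cos_period, sin_period, cos_0, sin_0. reflexivity. }
  destruct k as [|p|p].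
  - unfold cexpj. rewrite Rmult_0_r, cos_0, sin_0. reflexivity.
  - rewrite <- (positive_nat_Z p), <- INR_IZR_INZ. apply Hnat.
  - rewrite <- Pos2Z.opp_pos, opp_IZR, <- (positive_nat_Z p), <- INR_IZR_INZ.
    generalize (Hnat (Pos.to_nat p)). unfold cexpj.
    rewrite Ropp_mult_distr_r_reverse, cos_neg, sin_neg.
    intro H. injection H as Hc Hs. rewrite Hc, Hs, Ropp_0. reflexivity.
Qed.

Lemma cexpj_eq_1 (t : R) : cexpj t = 1 -> exists k : Z, t = 2 * PI * IZR k.
Proof.
  unfold cexpj. intro H. injection H as Hc _.
  assert (Hs : sin (t / 2) = 0).
  { replace t with (2 * (t / 2)) in Hc by field. rewrite cos_2a_sin in Hc. nra. }
  destruct (sin_eq_0_0 _ Hs) as [k Hk]. exists k. lra.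
Qed.

Lemma Cmult_eq_0_l (s w : C) : Cmult s w = 0 -> w <> 0 -> s = 0.
Proof.
  intros H Hw. rewrite <- (Cmult_1_r s), <- (Cinv_r w Hw), Cmult_assoc, H.
  apply Cmult_0_l.
Qed.

Lemma geometric_sum_cexpj (a t : R) (n : nat) :
  Cmult (sum_n (fun i => cexpj (a + INR i * t)) n) (Cminus (cexpj t) 1)
  = Cminus (cexpj (a + INR (S n) * t)) (cexpj a).
Proof.
  induction n as [|n IHn].
  - rewrite sum_O. change (INR 0) with 0. change (INR 1) with 1.
    replace (a + 0 * t) with a by ring. replace (a + 1 * t) with (a + t) by ring.
    rewrite <- cexpj_add.
    destruct (cexpj a) as [p1 p2]; destruct (cexpj t) as [r1 r2].
    unfold Cminus, Cplus, Copp, Cmult; simpl. f_equal; ring.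
  - rewrite sum_Sn. change plus with Cplus. cbv beta.
    rewrite Cmult_plus_distr_r, IHn.
    replace (a + INR (S (S n)) * t) with (a + INR (S n) * t + t)
      by (rewrite (S_INR (S n)); ring).
    rewrite <- (cexpj_add (a + INR (S n) * t) t).
    destruct (cexpj (a + INR (S n) * t)) as [p1 p2]; destruct (cexpj t) as [r1 r2];
    destruct (cexpj a) as [s1 s2].
    unfold Cminus, Cplus, Copp, Cmult; simpl. f_equal; ring.
Qed.

Lemma sum_cexpj_roots_of_unity (a : R) (M : Z) (L : nat) :
  (1 <= L)%nat -> (M mod Z.of_nat L <> 0)%Z ->
  sum_n (fun i => cexpj (a + INR i * (2 * PI * IZR M / INR L))) (L - 1) = RtoC 0.
Proof.
  intros HL Hmod.
  assert (HLr : INR L <> 0) by (apply not_0_INR; lia).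
  set (t := 2 * PI * IZR M / INR L).
  apply Cmult_eq_0_l with (w := Cminus (cexpj t) 1).
  - rewrite geometric_sum_cexpj. replace (S (L - 1)) with L by lia.
    rewrite <- cexpj_add.
    replace (INR L * t) with (2 * PI * IZR M) by (unfold t; field; exact HLr).
    rewrite cexpj_2PI_IZR, Cmult_1_r. apply Cplus_opp_r.
  - intro H. apply Hmod.
    assert (Ht : cexpj t = 1).
    { unfold Cminus, Cplus, Copp in H. destruct (cexpj t) as [c s].
      simpl in H. injection H as Hc Hs. unfold RtoC. f_equal; lra. }
    destruct (cexpj_eq_1 t Ht) as [k Hk].
    assert (E : IZR M = IZR k * INR L).
    { unfold t in Hk. assert (HP := PI_RGT_0).
      apply (Rmult_eq_reg_l (2 * PI)); [|lra].
      apply (Rmult_eq_reg_r (/ INR L)); [|apply Rinv_neq_0_compat; exact HLr].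
      rewrite Hk at 1. field. exact HLr. }
    rewrite INR_IZR_INZ, <- mult_IZR in E. apply eq_IZR in E. rewrite E.
    apply Z.mod_mul. lia.
Qed.

Lemma vdot_vadd_vscale (d q1 : vec3) (s : R) :
  vdot d (vadd q1 (vscale s d)) = vdot d q1 + s * vdot d d.
Proof. destruct d as [[d1 d2] d3]; destruct q1 as [[x1 x2] x3]; simpl; ring. Qed.

Lemma vsub_vadd_vscale (d q1 : vec3) (s1 s2 : R) :
  vsub (vadd q1 (vscale s1 d)) (vadd q1 (vscale s2 d)) = vscale (s1 - s2) d.
Proof.
  destruct d as [[d1 d2] d3]; destruct q1 as [[x1 x2] x3]; simpl.
  f_equal; [f_equal|]; ring.
Qed.

Lemma vdot_self_ge0 (u : vec3) : 0 <= vdot u u.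
Proof. destruct u as [[u1 u2] u3]; simpl; nra. Qed.

Lemma vnorm_vscale (s : R) (u : vec3) : vnorm (vscale s u) = Rabs s * vnorm u.
Proof.
  unfold vnorm. replace (vdot (vscale s u) (vscale s u)) with (Rsqr s * vdot u u).
  2:{ destruct u as [[u1 u2] u3]; simpl; unfold Rsqr; ring. }
  rewrite sqrt_mult, sqrt_Rsqr_abs; [reflexivity | apply Rle_0_sqr | apply vdot_self_ge0].
Qed.

Lemma vnorm_pow2 (u : vec3) : vnorm u ^ 2 = vdot u u.
Proof. unfold vnorm. rewrite <- Rsqr_pow2. apply Rsqr_sqrt, vdot_self_ge0. Qed.

Lemma vdot_vsub_self_gt0 (u v : vec3) : u <> v -> 0 < vdot (vsub u v) (vsub u v).
Proof.
  intro Huv. destruct u as [[a1 a2] a3]; destruct v as [[b1 b2] b3]; simpl.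
  destruct (Req_dec a1 b1); destruct (Req_dec a2 b2); destruct (Req_dec a3 b3);
    try (subst; exfalso; apply Huv; reflexivity); nra.
Qed.

Lemma progression_separation (q1 d : vec3) (K : R) (i j : nat) :
  i <> j ->
  Rabs K * vnorm d <= vnorm (vsub (vadd q1 (vscale (INR i * K) d))
                                  (vadd q1 (vscale (INR j * K) d))).
Proof.
  intro Hij. rewrite vsub_vadd_vscale, vnorm_vscale.
  replace (INR i * K - INR j * K) with ((INR i - INR j) * K) by ring.
  rewrite Rabs_mult.
  assert (Hgap : 1 <= Rabs (INR i - INR j)).
  { destruct (Nat.lt_gt_cases i j) as [[Hlt | Hgt] _]; [exact Hij | |].
    - assert (INR i + 1 <= INR j) by (rewrite <- S_INR; apply le_INR; lia).
      rewrite Rabs_left1; lra.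
    - assert (INR j + 1 <= INR i) by (rewrite <- S_INR; apply le_INR; lia).
      rewrite Rabs_right; lra. }
  assert (0 <= Rabs K * vnorm d) by (apply Rmult_le_pos; [apply Rabs_pos | apply sqrt_pos]).
  rewrite Rmult_assoc. nra.
Qed.

Lemma progression_step_ge (n lam dmin m D : R) :
  0 < n -> 0 < lam -> 0 < dmin -> 0 < D -> n * dmin * D / lam <= m ->
  dmin <= Rabs (m / n * lam / D ^ 2) * D.
Proof.
  intros Hn Hlam Hdmin HD Hm.
  assert (HnD : 0 < n * D) by (apply Rmult_lt_0_compat; assumption).
  assert (Hm0 : 0 < m).
  { eapply Rlt_le_trans; [|exact Hm]. apply Rdiv_lt_0_compat; [|exact Hlam].
    rewrite Rmult_assoc, (Rmult_comm dmin), <- Rmult_assoc. nra. }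
  replace (m / n * lam / D ^ 2) with (m * lam / (n * D) / D) by (field; lra).
  rewrite Rabs_pos_eq.
  2:{ apply Rlt_le, Rdiv_lt_0_compat; [apply Rdiv_lt_0_compat; nra | exact HD]. }
  replace (m * lam / (n * D) / D * D) with (m * lam / (n * D)) by (field; lra).
  apply Rmult_le_reg_r with (n * D / lam); [apply Rdiv_lt_0_compat; assumption|].
  replace (m * lam / (n * D) * (n * D / lam)) with m by (field; lra).
  replace (dmin * (n * D / lam)) with (n * dmin * D / lam) by (field; lra).
  exact Hm.
Qed.

Lemma Rceil_ge (x : R) : x <= IZR (Rceil x).
Proof. unfold Rceil. rewrite opp_IZR. destruct (base_Int_part (- x)). lra. Qed.

(* The case split in varsigma* exists precisely to skip the multiples of L. *)
Lemma varsigma_star_shift_spec (L : nat) (lam dmin : R) (kk kk' : vec3) :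
  (2 <= L)%nat ->
  exists M : Z, varsigma_star L lam dmin kk kk' + / INR L = IZR M / INR L /\
    (M mod Z.of_nat L <> 0)%Z /\
    INR L * dmin * vnorm (vsub kk kk') / lam <= IZR M.
Proof.
  intro HL. assert (HLr : INR L <> 0) by (apply not_0_INR; lia).
  assert (Hnu := Rceil_ge (INR L * dmin * vnorm (vsub kk kk') / lam - 1)).
  unfold varsigma_star. fold (nu_min L lam dmin kk kk') in *.
  set (nu := nu_min L lam dmin kk kk') in *.
  destruct (Z.eqb ((nu + 1) mod Z.of_nat L) 0) eqn:E; simpl.
  - exists (nu + 2)%Z. apply Z.eqb_eq in E. split; [|split].
    + rewrite !plus_IZR. field. exact HLr.
    + replace (nu + 2)%Z with (nu + 1 + 1)%Z by ring.
      rewrite <- Z.add_mod_idemp_l, E by lia.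
      rewrite Z.mod_small; lia.
    + rewrite plus_IZR. lra.
  - exists (nu + 1)%Z. apply Z.eqb_neq in E. split; [|split].
    + rewrite plus_IZR. field. exact HLr.
    + exact E.
    + rewrite plus_IZR. lra.
Qed.

Lemma xi_ge0 (L : nat) (lam : R) (kk kk' : vec3) (q : nat -> vec3) :
  0 <= xi L lam kk kk' q.
Proof.
  unfold xi. apply Rmult_le_pos; [|apply pow2_ge_0].
  rewrite <- pow_inv. apply pow2_ge_0.
Qed.

Lemma xi_progression_eq_0 (L : nat) (lam : R) (kk kk' q1 : vec3) (M : Z) :
  (1 <= L)%nat -> lam <> 0 -> kk <> kk' -> (M mod Z.of_nat L <> 0)%Z ->
  let d := vsub kk kk' in
  xi L lam kk kk'
    (fun l => vadd q1 (vscale (INR (l - 1) * (IZR M / INR L * lam / vdot d d)) d)) = 0.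
Proof.
  intros HL Hlam Hne HM d.
  assert (HLr : INR L <> 0) by (apply not_0_INR; lia).
  assert (Hdd : 0 < vdot d d) by (apply vdot_vsub_self_gt0; exact Hne).
  unfold xi. fold d.
  rewrite (sum_n_ext _
    (fun i => cexpj (2 * PI / lam * vdot d q1 + INR i * (2 * PI * IZR M / INR L)))).
  - rewrite sum_cexpj_roots_of_unity by assumption. rewrite Cmod_0. ring.
  - intro i. replace (S i - 1)%nat with i by lia.
    rewrite vdot_vadd_vscale. f_equal. field. lra.
Qed.

Theorem theorem1 (L : nat) (lam dmin : R) (qr : vec3) (Creg : vec3 -> Prop)
  (kk kk' : vec3) :
  (2 <= L)%nat -> 0 < lam -> 0 < dmin ->
  vnorm kk = 1 -> vnorm kk' = 1 -> kk <> kk' ->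
  forall q1 : vec3,
    let q := q_star L lam dmin kk kk' q1 in
    xi L lam kk kk' q = 0 /\
    (forall l l', (1 <= l <= L)%nat -> (1 <= l' <= L)%nat -> l <> l' ->
       dmin <= vnorm (vsub (q l) (q l'))) /\
    ((forall l, (1 <= l <= L)%nat -> Creg (vadd qr (q l))) ->
       feasible L dmin qr Creg q /\
       (forall p : nat -> vec3, feasible L dmin qr Creg p ->
          xi L lam kk kk' q <= xi L lam kk kk' p)).
Proof.
  intros HL Hlam Hdmin _ _ Hne q1 q.
  destruct (varsigma_star_shift_spec L lam dmin kk kk' HL) as [M [HMe [HMmod HMge]]].
  set (d := vsub kk kk') in *.
  set (K := IZR M / INR L * lam / vdot d d).
  assert (Hq : q = fun l => vadd q1 (vscale (INR (l - 1) * K) d)).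
  { unfold q, q_star. fold d. rewrite HMe, vnorm_pow2. reflexivity. }
  assert (Hxi : xi L lam kk kk' q = 0).
  { rewrite Hq. apply xi_progression_eq_0; [lia | lra | exact Hne | exact HMmod]. }
  assert (Hstep : dmin <= Rabs K * vnorm d).
  { unfold K. rewrite <- vnorm_pow2. apply progression_step_ge; try assumption.
    - apply lt_0_INR. lia.
    - apply sqrt_lt_R0, vdot_vsub_self_gt0, Hne. }
  assert (Hdist : forall l l', (1 <= l <= L)%nat -> (1 <= l' <= L)%nat -> l <> l' ->
                               dmin <= vnorm (vsub (q l) (q l'))).
  { intros l l' Hl Hl' Hll'. rewrite Hq.
    eapply Rle_trans; [exact Hstep|]. apply progression_separation. lia. }
  split; [exact Hxi | split; [exact Hdist |]].
  intro HC. split; [split; assumption |].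
  intros p _. rewrite Hxi. apply xi_ge0.
Qed.
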